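(* Consider linear implicit models $Ex_{t+1}=Fx_t+Ku_t$ with $E,F\in\mathbb{R}^{n\times n}$, $K\in\mathbb{R}^{n\times m}$. (i) If there exist $\epsilon>0$ and $\alpha\in(0,1)$ such that $E+E^\top\succ\epsilon I$, $E\in\mathbb{M}^n$, $F\ge0$, $K\ge0$ and $\mathbf{1}^\top(\alpha E-F)\ge0$, then $E$ is invertible and the explicit system $x_{t+1}=Ax_t+Bu_t$ with $A=E^{-1}F$, $B=E^{-1}K$ is a positive linear system with $A$ Schur stable (all eigenvalues of modulus $<1$). (ii) Conversely, for every $A\in\mathbb{R}^{n\times n}$ with $A\ge0$ Schur stable and every $B\in\mathbb{R}^{n\times m}$ with $B\ge0$, there exist $E$ (which can be taken diagonal with positive diagonal), $F$, $K$, $\epsilon>0$ and $\alpha\in(0,1)$ satisfying all conditions in (i) with $E^{-1}F=A$ and $E^{-1}K=B$. Hence these conditions parametrize exactly all stable discrete-time positive linear systems.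
   Context: Inequalities between vectors/matrices are elementwise; $\mathbf{1}$ is the all-ones column vector; $M\succ0$ means positive definite. $\mathbb{M}^n$ is the set of $n\times n$ nonsingular M-matrices: real matrices with off-diagonal entries $\le0$ and all eigenvalues having positive real part. A discrete-time linear system $x_{t+1}=Ax_t+Bu_t$ is positive if $x_0\ge0$ and $u_t\ge0$ for all $t$ imply $x_t\ge0$ for all $t$ (equivalently $A\ge0$, $B\ge0$). *)

From mathcomp Require Import all_boot all_order all_algebra all_reals complex.
Set Implicit Arguments. Unset Strict Implicit. Unset Printing Implicit Defensive.
Import Order.TTheory GRing.Theory Num.Theory.
Local Open Scope ring_scope.

Section Defs.
Variable R : realType.

Definition mx_nonneg p q (M : 'M[R]_(p, q)) : Prop := forall i j, 0 <= M i j.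

Definition posdef n (M : 'M[R]_n) : Prop :=
  forall x : 'cV[R]_n, x != 0 -> 0 < (x^T *m M *m x) 0 0.

Definition cmx p q (M : 'M[R]_(p, q)) : 'M[R[i]]_(p, q) :=
  map_mx (fun x : R => (x%:C)%C) M.

Definition Mmatrix n (E : 'M[R]_n) : Prop :=
  (forall i j : 'I_n, i != j -> E i j <= 0) /\
  (forall l : R[i], eigenvalue (cmx E) l -> 0 < 'Re l).

Definition schur_stable n (A : 'M[R]_n) : Prop :=
  forall l : R[i], eigenvalue (cmx A) l -> `|l| < 1.

Fixpoint traj n m (A : 'M[R]_n) (B : 'M[R]_(n, m)) (x0 : 'cV[R]_n)
    (u : nat -> 'cV[R]_m) (t : nat) : 'cV[R]_n :=
  match t with
  | 0 => x0
  | t'.+1 => A *m traj A B x0 u t' + B *m u t'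
  end.

Definition positive_system n m (A : 'M[R]_n) (B : 'M[R]_(n, m)) : Prop :=
  forall (x0 : 'cV[R]_n) (u : nat -> 'cV[R]_m),
    mx_nonneg x0 -> (forall t, mx_nonneg (u t)) ->
    forall t, mx_nonneg (traj A B x0 u t).

Definition ones_row n : 'rV[R]_n := const_mx 1.

Definition implicit_conds n m (E F : 'M[R]_n) (K : 'M[R]_(n, m)) (eps alpha : R)
  : Prop :=
  [/\ 0 < eps, 0 < alpha < 1, posdef (E + E^T - eps%:M), Mmatrix E &
      [/\ mx_nonneg F, mx_nonneg K & mx_nonneg (ones_row n *m (alpha *: E - F))]].

End Defs.

From mathcomp Require Import all_boot all_order all_algebra all_reals complex.
From mathcomp Require Import ring lra classical_sets.
Import Order.TTheory GRing.Theory Num.Theory.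
Local Open Scope ring_scope.
Set Implicit Arguments. Unset Strict Implicit. Unset Printing Implicit Defensive.

(* The central notion is that of a monotone matrix (Collatz): M Y >= 0
   implies Y >= 0, which is equivalent to M being invertible with M^-1 >= 0.

   (i) A Z-matrix with a positive definite quadratic form is monotone (split
       a column of Y into its positive and negative parts), and
       E + E^T > eps I gives such a form.  Hence E^-1 >= 0, so A = E^-1 F and
       B = E^-1 K are nonnegative and the system is positive.  Multiplying
       1^T (alpha E - F) >= 0 by E^-1 bounds the column sums of F E^-1 by
       alpha < 1; this bounds its eigenvalues, which are those of A.
   (ii) For A >= 0 Schur stable, every I - tA with t in [0,1] is invertible.
       Monotonicity of I - tA propagates forward by steps that are uniform
       near any point, so a supremum argument shows that I - A is monotone.
       Then d = 1^T (I - A)^-1 >= 1 satisfies d = 1^T + d A, and E = diag d,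
       F = E A, K = E B, eps = 1, alpha = (s + 1) / (s + 2) with s the sum
       of the entries of d meet all the conditions of (i). *)

Section Monotone.
Variable R : realType.

Lemma mx_nonneg_mul p q r (A : 'M[R]_(p, q)) (B : 'M[R]_(q, r)) :
  mx_nonneg A -> mx_nonneg B -> mx_nonneg (A *m B).
Proof.
by move=> hA hB i j; rewrite mxE; apply: sumr_ge0 => k _; apply: mulr_ge0.
Qed.

Lemma mx_nonneg1 n : mx_nonneg (1%:M : 'M[R]_n).
Proof. by move=> i j; rewrite mxE ler0n. Qed.

Definition monotone n (M : 'M[R]_n) : Prop :=
  forall p (Y : 'M[R]_(n, p)), mx_nonneg (M *m Y) -> mx_nonneg Y.

Lemma nonunit_kernel n (M : 'M[R]_n) :
  M \notin unitmx -> exists2 x : 'cV[R]_n, x != 0 & M *m x = 0.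
Proof.
rewrite unitmxE unitfE negbK -det_tr => /det0P [v v0 hv].
exists v^T; first by rewrite trmx_eq0.
by rewrite -(trmxK M) -trmx_mul hv trmx0.
Qed.

(* A monotone matrix is invertible with a nonnegative inverse: if M x = 0
   then both x and -x are nonnegative. *)
Lemma monotone_inv n (M : 'M[R]_n) :
  monotone M -> M \in unitmx /\ mx_nonneg (invmx M).
Proof.
move=> hM; have Mu : M \in unitmx.
  apply: contraT => /nonunit_kernel [x x0 Mx].
  have xge0 : mx_nonneg x by apply: hM; rewrite Mx => i j; rewrite mxE.
  have Nxge0 : mx_nonneg (- x).
    by apply: hM; rewrite mulmxN Mx oppr0 => i j; rewrite mxE.
  case/negP: x0; apply/eqP/matrixP => i j; apply/eqP.
  by rewrite mxE eq_le xge0 andbT -oppr_ge0; move: (Nxge0 i j); rewrite mxE.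
split => //; apply: hM; rewrite mulmxV //; exact: mx_nonneg1.
Qed.

Lemma monotone_mul n (P Q : 'M[R]_n) : monotone P -> monotone Q -> monotone (P *m Q).
Proof. by move=> hP hQ p Y; rewrite -mulmxA => /hP /hQ. Qed.

Lemma bilinear_formE n (E : 'M[R]_n) (x y : 'cV[R]_n) :
  (x^T *m E *m y) 0 0 = \sum_a \sum_b x a 0 * E a b * y b 0.
Proof.
rewrite mxE; under eq_bigr => b _ do rewrite mxE mulr_suml.
rewrite exchange_big; apply: eq_bigr => a _; apply: eq_bigr => b _.
by rewrite mxE.
Qed.

(* For a Z-matrix E and nonnegative vectors with disjoint supports, the
   bilinear form z^T E q is nonpositive: only off-diagonal terms survive. *)
Lemma Zmatrix_disjoint_form n (E : 'M[R]_n) (z q : 'cV[R]_n) :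
  (forall i j, i != j -> E i j <= 0) -> mx_nonneg z -> mx_nonneg q ->
  (forall k, z k 0 * q k 0 = 0) -> (z^T *m E *m q) 0 0 <= 0.
Proof.
move=> hZ z0 q0 zq; rewrite bilinear_formE; apply: sumr_le0 => a _.
apply: sumr_le0 => b _; have [<-|ab] := eqVneq a b; first by rewrite mulrAC zq mul0r.
by apply: mulr_le0_ge0 => //; apply: mulr_ge0_le0 => //; apply: hZ.
Qed.

(* For a
   column y of Y with E y >= 0, split y = q - z into positive and negative
   parts; then z^T E z = z^T E q - z^T (E y) <= 0, which forces z = 0. *)
Lemma Zmatrix_posdef_monotone n (E : 'M[R]_n) :
  (forall i j, i != j -> E i j <= 0) ->
  (forall x : 'cV[R]_n, x != 0 -> 0 < (x^T *m E *m x) 0 0) -> monotone E.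
Proof.
move=> hZ hP p Y hY i j.
pose z : 'cV[R]_n := \col_k (if Y k j < 0 then - Y k j else 0).
pose q : 'cV[R]_n := \col_k (if Y k j < 0 then 0 else Y k j).
have z0 : mx_nonneg z.
  by move=> k l; rewrite !mxE; case: ifP => // /ltW; rewrite oppr_ge0.
have q0 : mx_nonneg q.
  by move=> k l; rewrite !mxE; case: ifP => // /negbT; rewrite -leNgt.
have zq k : z k 0 * q k 0 = 0 by rewrite !mxE; case: ifP; rewrite ?mulr0 ?mul0r.
have Yqz : col j Y = q - z.
  by apply/matrixP => k l; rewrite !mxE; case: ifP; rewrite ?subr0 ?sub0r ?opprK.
have zEy : 0 <= (z^T *m E *m col j Y) 0 0.
  rewrite -mulmxA; have -> : E *m col j Y = col j (E *m Y) by rewrite !colE mulmxA.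
  apply: mx_nonneg_mul; last by move=> k l; rewrite mxE; apply: hY.
  by move=> k l; rewrite mxE.
have zEz : (z^T *m E *m z) 0 0 <= 0.
  have -> : z^T *m E *m z = z^T *m E *m q - z^T *m E *m col j Y.
    by rewrite -mulmxBr Yqz opprB addrC subrK.
  rewrite [(_ - _ : 'M_1) 0 0]mxE [(- _ : 'M_1) 0 0]mxE.
  have := Zmatrix_disjoint_form hZ z0 q0 zq; lra.
have /eqP z_eq0 : z == 0 by apply: contraTT zEz => /hP; rewrite -ltNge.
rewrite leNgt; apply/negP => Yij.
have := congr1 (fun M : 'cV[R]_n => M i 0) z_eq0; rewrite !mxE Yij.
by move/eqP; rewrite oppr_eq0 => /eqP Y0; rewrite Y0 ltxx in Yij.
Qed.

End Monotone.

Section ImplicitToExplicit.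
Variable R : realType.

(* E + E^T - eps I > 0 with eps > 0 makes the quadratic form of E positive,
   since x^T E^T x = x^T E x and x^T (eps I) x >= 0. *)
Lemma posdef_shift_quad n (E : 'M[R]_n) eps :
  0 < eps -> posdef (E + E^T - eps%:M) ->
  forall x : 'cV[R]_n, x != 0 -> 0 < (x^T *m E *m x) 0 0.
Proof.
move=> eps0 hP x x0; have := hP x x0.
have trE : (x^T *m E^T *m x) 0 0 = (x^T *m E *m x) 0 0.
  have <- : (x^T *m E *m x)^T = x^T *m E^T *m x by rewrite !trmx_mul trmxK mulmxA.
  by rewrite mxE.
have epsx : 0 <= (x^T *m eps%:M *m x) 0 0.
  rewrite bilinear_formE; apply: sumr_ge0 => a _; apply: sumr_ge0 => b _.
  rewrite mxE; have [<-|ab] := eqVneq a b; last by rewrite mulr0n mulr0 mul0r.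
  by rewrite mulr1n mulrAC -expr2 mulr_ge0 ?sqr_ge0 ?ltW.
rewrite mulmxBr mulmxBl mulmxDr mulmxDl [(_ - _ : 'M_1) 0 0]mxE [(- _ : 'M_1) 0 0]mxE.
rewrite [(_ + _ : 'M_1) 0 0]mxE trE.
lra.
Qed.

Lemma nonneg_positive_system n m (A : 'M[R]_n) (B : 'M[R]_(n, m)) :
  mx_nonneg A -> mx_nonneg B -> positive_system A B.
Proof.
move=> hA hB x0 u hx hu; elim => [|t IH] //= i j; rewrite mxE.
by apply: addr_ge0; apply: mx_nonneg_mul.
Qed.

(* An eigenvalue (defined through left eigenvectors) has a right
   eigenvector, as l I - g and its transpose are both singular. *)
Lemma right_eigenvector (F : fieldType) n (g : 'M[F]_n) l :
  eigenvalue g l -> exists2 x : 'cV[F]_n, x != 0 & g *m x = l *: x.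
Proof.
move=> /eigenvalueP [v vg v0].
have : \det (l%:M - g) == 0.
  by apply/det0P; exists v => //; rewrite mulmxBr mul_mx_scalar vg subrr.
rewrite -det_tr => /det0P [w w0 hw]; exists w^T; first by rewrite trmx_eq0.
move: hw => /(congr1 trmx); rewrite trmx_mul trmxK trmx0 mulmxBl => /eqP.
by rewrite subr_eq0 mul_scalar_mx => /eqP <-.
Qed.

(* X Y and Y X share their eigenvalues when X is invertible:
   v X Y = l v gives (v X) Y X = l (v X). *)
Lemma eigenvalue_mulC (F : fieldType) n (X Y : 'M[F]_n) l :
  X \in unitmx -> eigenvalue (X *m Y) l -> eigenvalue (Y *m X) l.
Proof.
move=> Xu /eigenvalueP [v vXY v0]; apply/eigenvalueP; exists (v *m X).
  by rewrite mulmxA -(mulmxA v) vXY -scalemxAl.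
by apply: contraNneq v0 => vX0; rewrite -(mulmxK Xu v) vX0 mul0mx.
Qed.

Lemma cmx_mul p q r (A : 'M[R]_(p, q)) (B : 'M[R]_(q, r)) :
  cmx (A *m B) = cmx A *m cmx B.
Proof. exact: map_mxM. Qed.

Lemma normcR (x : R) : `|(x%:C)%C| = (`|x|%:C)%C.
Proof. by rewrite normc_def /= expr0n addr0 sqrtr_sqr. Qed.

Lemma nonzero_entry (F : fieldType) p (x : 'cV[F]_p) :
  x != 0 -> exists a, x a 0 != 0.
Proof.
move=> x0; have /existsP [a ha] : [exists a, x a 0 != 0]; last by exists a.
apply: contraNT x0 => /existsPn x0; apply/eqP/matrixP => a b.
by rewrite ord1 mxE; apply/eqP/negPn; exact: x0.
Qed.

(* A nonnegative matrix whose column sums are at most alpha < 1 is Schur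
   stable: for C y = l y, summing |l| |y_i| <= sum_j C_ij |y_j| over i gives
   |l| sum |y| <= alpha sum |y|. *)
Lemma colsum_schur_stable n (C : 'M[R]_n) alpha :
  mx_nonneg C -> alpha < 1 -> (forall j, \sum_i C i j <= alpha) ->
  schur_stable C.
Proof.
move=> C0 a1 colC l /right_eigenvector [y y0 hy].
have row_ineq i : `|l| * `|y i 0| <= \sum_j ((C i j)%:C)%C * `|y j 0|.
  rewrite -normrM; have -> : l * y i 0 = (cmx C *m y) i 0 by rewrite hy mxE.
  rewrite mxE; apply: le_trans (ler_norm_sum _ _ _) _; apply: ler_sum => j _.
  by rewrite normrM /cmx mxE normcR (ger0_norm (C0 i j)).
pose S := \sum_i `|y i 0|.
have S_gt0 : 0 < S.
  have [i yi] := nonzero_entry y0.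
  by rewrite /S (bigD1 i) //= ltr_pwDl ?normr_gt0 // sumr_ge0.
have : `|l| * S <= (alpha%:C)%C * S.
  rewrite mulr_sumr; apply: le_trans (ler_sum _ (fun i _ => row_ineq i)) _.
  rewrite exchange_big mulr_sumr /=; apply: ler_sum => j _.
  by rewrite -mulr_suml ler_wpM2r // -rmorph_sum lecR.
rewrite ler_pM2r // => /le_lt_trans; apply.
by rewrite -[1]/(1%:C)%C ltcR.
Qed.

(* Multiplying 1^T (alpha E - F) >= 0 on the right by E^-1 >= 0 bounds the
   column sums of F E^-1 by alpha; F E^-1 is similar to A = E^-1 F. *)
Lemma implicit_schur_stable n (E F : 'M[R]_n) alpha :
  E \in unitmx -> mx_nonneg (invmx E) -> mx_nonneg F -> alpha < 1 ->
  mx_nonneg (ones_row R n *m (alpha *: E - F)) -> schur_stable (invmx E *m F).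
Proof.
move=> Eu Ei F0 a1 hrow.
have colC j : \sum_i (F *m invmx E) i j <= alpha.
  have := mx_nonneg_mul hrow Ei 0 j.
  rewrite mulmxBr mulmxBl -scalemxAr -scalemxAl mulmxK // -mulmxA !mxE subr_ge0.
  by under eq_bigr => i _ do rewrite mxE mul1r; rewrite mulr1.
have cEu : cmx (invmx E) \in unitmx by rewrite map_unitmx unitmx_inv.
move=> l; rewrite cmx_mul => /(eigenvalue_mulC cEu); rewrite -cmx_mul.
exact: colsum_schur_stable (mx_nonneg_mul F0 Ei) a1 colC l.
Qed.

(* Part (i): E is monotone, hence invertible with E^-1 >= 0. *)
Lemma implicit_to_explicit n m (E F : 'M[R]_n) (K : 'M[R]_(n, m)) eps alpha :
  implicit_conds E F K eps alpha ->
  [/\ E \in unitmx,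
      positive_system (invmx E *m F) (invmx E *m K) &
      schur_stable (invmx E *m F)].
Proof.
case=> eps0 /andP[_ a1] hP [hZ _] [F0 K0 hrow].
have [Eu Ei] := monotone_inv (Zmatrix_posdef_monotone hZ (posdef_shift_quad eps0 hP)).
split => //; first by apply: nonneg_positive_system; apply: mx_nonneg_mul.
exact: (implicit_schur_stable Eu Ei F0 a1 hrow).
Qed.

End ImplicitToExplicit.

Section Resolvent.
Variable R : realType.

(* The pencil I - tA; part (ii) needs I - A = pencil A 1 to be monotone. *)
Definition pencil n (A : 'M[R]_n) (t : R) : 'M[R]_n := 1%:M - t *: A.

(* For A Schur stable and 0 < t <= 1, a singular I - tA would make
   1/t >= 1 an eigenvalue of A. *)
Lemma schur_pencil_unit n (A : 'M[R]_n) t :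
  schur_stable A -> 0 <= t <= 1 -> pencil A t \in unitmx.
Proof.
move=> hS /andP[t0 t1]; have [->|tn0] := eqVneq t 0.
  by rewrite /pencil scale0r subr0 unitmx1.
have tp : 0 < t by rewrite lt_def tn0.
apply: contraT; rewrite unitmxE unitfE negbK => /det0P [v v0 hv].
have vA : v *m A = t^-1 *: v.
  move: hv; rewrite /pencil mulmxBr mulmx1 -scalemxAr => /eqP; rewrite subr_eq0 => /eqP e.
  by rewrite [in RHS]e scalerA mulVf // scale1r.
have eig : eigenvalue (cmx A) ((t^-1)%:C)%C.
  apply/eigenvalueP; exists (cmx v); last by rewrite map_mx_eq0.
  by rewrite -cmx_mul vA /cmx map_mxZ.
have := hS _ eig; rewrite normcR ltcR ger0_norm ?invr_ge0 ?ltW //.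
rewrite invf_lt1 //; lra.
Qed.

(* I - hN is monotone when N >= 0 and every row sum of hN is below 1: at a
   most negative entry of a column of Y, a negative value would make the
   corresponding entry of (I - hN) Y negative. *)
Lemma monotone_sub_small n (N : 'M[R]_n) h :
  mx_nonneg N -> 0 <= h -> (forall i, h * \sum_j N i j < 1) ->
  monotone (1%:M - h *: N).
Proof.
move=> hN h0 hs p Y hY i j; rewrite leNgt; apply/negP => Yneg.
case: (@arg_minP _ _ _ i xpredT (fun k => Y k j) isT) => k0 _ kmin.
have Yk : Y k0 j < 0 by apply: le_lt_trans (kmin i isT) Yneg.
have := hY k0 j.
rewrite mulmxBl mul1mx -scalemxAl !mxE.
have : h * (\sum_l N k0 l) * Y k0 j <= h * \sum_l (N k0 l * Y l j).
  rewrite -mulrA mulr_suml; apply: ler_wpM2l => //.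
  by apply: ler_sum => l _; apply: ler_wpM2l => //; apply: kmin.
have := hs k0; move: (h * \sum_l N k0 l) => s.
move: (\sum_l (N k0 l * Y l j)) => u; nra.
Qed.

Definition l1norm p q (X : 'M[R]_(p, q)) : R := \sum_i \sum_j `|X i j|.

Lemma l1norm_ge0 p q (X : 'M[R]_(p, q)) : 0 <= l1norm X.
Proof. by apply: sumr_ge0 => i _; apply: sumr_ge0. Qed.

Lemma rowsum_le_l1norm p q (X : 'M[R]_(p, q)) i : \sum_j X i j <= l1norm X.
Proof.
apply: le_trans (_ : \sum_j `|X i j| <= _).
  by apply: ler_sum => j _; apply: ler_norm.
by rewrite /l1norm (bigD1 i) //= lerDl; apply: sumr_ge0 => k _; apply: sumr_ge0.
Qed.

Lemma l1norm_mul p q r (X : 'M[R]_(p, q)) (Y : 'M[R]_(q, r)) :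
  l1norm (X *m Y) <= l1norm X * l1norm Y.
Proof.
rewrite /l1norm mulr_suml; apply: ler_sum => i _.
apply: le_trans (_ : \sum_j \sum_k `|X i k| * `|Y k j| <= _).
  apply: ler_sum => j _; rewrite mxE; apply: le_trans (ler_norm_sum _ _ _) _.
  by under eq_bigr => k _ do rewrite normrM.
rewrite exchange_big mulr_suml /=; apply: ler_sum => k _.
rewrite -mulr_sumr ler_wpM2l //.
by rewrite [X in _ <= X](bigD1 k) //= lerDl; apply: sumr_ge0 => l _; apply: sumr_ge0.
Qed.

Lemma l1norm_sub_scale p q (X Y : 'M[R]_(p, q)) h :
  0 <= h -> l1norm (X - h *: Y) <= l1norm X + h * l1norm Y.
Proof.
move=> h0; rewrite /l1norm mulr_sumr -big_split; apply: ler_sum => i _.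
rewrite mulr_sumr -big_split; apply: ler_sum => j _.
by rewrite !mxE; apply: le_trans (ler_normB _ _) _; rewrite normrM ger0_norm.
Qed.

(* Moving forward by h: I - (t+h)A = (I - tA)(I - h (I - tA)^-1 A), and the
   second factor is monotone when h |(I - tA)^-1 A|_1 < 1. *)
Lemma monotone_pencil_step n (A : 'M[R]_n) t h :
  mx_nonneg A -> monotone (pencil A t) -> 0 <= h ->
  h * l1norm (invmx (pencil A t) *m A) < 1 -> monotone (pencil A (t + h)).
Proof.
move=> A0 hM h0 hh; have [Mu Mi] := monotone_inv hM.
have -> : pencil A (t + h) = pencil A t *m (1%:M - h *: (invmx (pencil A t) *m A)).
  rewrite mulmxBr mulmx1 -scalemxAr mulmxA mulmxV // mul1mx /pencil.
  by rewrite scalerDl opprD addrA.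
apply: monotone_mul => //; apply: monotone_sub_small => //.
  exact: mx_nonneg_mul.
by move=> i; apply: le_lt_trans hh; rewrite ler_wpM2l // rowsum_le_l1norm.
Qed.

(* Going back from an invertible I - TA to I - tA with t <= T close to T,
   the inverse stays bounded: N = G - (T - t) N A G for the two inverses. *)
Lemma pencil_inv_bound n (A : 'M[R]_n) t T :
  t <= T -> pencil A t \in unitmx -> pencil A T \in unitmx ->
  (T - t) * l1norm (A *m invmx (pencil A T)) <= 1 / 2 ->
  l1norm (invmx (pencil A t)) <= 2 * l1norm (invmx (pencil A T)).
Proof.
move=> tT Mtu MTu small.
set N := invmx (pencil A t); set G := invmx (pencil A T).
have eN : N = G - (T - t) *: (N *m (A *m G)).
  have MT : pencil A T = pencil A t - (T - t) *: A.
    by rewrite /pencil scalerBl opprB addrA subrK.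
  rewrite -{1}(mulmx1 N) -(mulmxV MTu) -/G MT mulmxA mulmxBr mulVmx //.
  by rewrite mulmxBl mul1mx -scalemxAr -scalemxAl mulmxA.
have : l1norm N <= l1norm G + (T - t) * (l1norm N * l1norm (A *m G)).
  rewrite {1}eN; apply: le_trans (l1norm_sub_scale _ _ _) _; first lra.
  by rewrite lerD2l ler_wpM2l ?subr_ge0 // l1norm_mul.
have := l1norm_ge0 N; have := l1norm_ge0 (A *m G); nra.
Qed.

(* The inverse
   bound above makes the admissible forward step uniform in t. *)
Lemma monotone_pencil_local n (A : 'M[R]_n) T :
  mx_nonneg A -> pencil A T \in unitmx ->
  exists2 delta, 0 < delta &
    forall t, T - delta <= t <= T -> monotone (pencil A t) ->
    forall s, t <= s <= T + delta -> monotone (pencil A s).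
Proof.
move=> A0 MTu; set G := invmx (pencil A T).
pose c := l1norm (A *m G); pose g := l1norm G; pose a := l1norm A.
have c0 : 0 <= c by apply: l1norm_ge0.
have ga0 : 0 <= g * a by apply: mulr_ge0; apply: l1norm_ge0.
pose delta := 1 / (2 * c + 4 * (g * a) + 2).
have delta0 : 0 < delta by rewrite divr_gt0 //; lra.
have delta_eq : delta * (2 * c + 4 * (g * a) + 2) = 1.
  by rewrite /delta mul1r mulVf // gt_eqF //; lra.
have deltac : 0 <= delta * c by rewrite mulr_ge0 // ltW.
have deltaga : 0 <= delta * (g * a) by rewrite mulr_ge0 // ltW.
exists delta => // t /andP[tl tT] Mt s /andP[ts sT].
set N := invmx (pencil A t); have [Mtu N0] := monotone_inv Mt.
have Nbound : l1norm N <= 2 * g.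
  apply: pencil_inv_bound => //.
  have : (T - t) * c <= delta * c by rewrite ler_wpM2r //; lra.
  rewrite -/G -/c; lra.
have NAbound : l1norm (N *m A) <= 2 * (g * a).
  apply: le_trans (l1norm_mul N A) _; rewrite mulrA ler_wpM2r //.
  exact: l1norm_ge0.
have -> : s = t + (s - t) by rewrite addrC subrK.
apply: monotone_pencil_step => //; first lra.
have : (s - t) * l1norm (N *m A) <= (2 * delta) * (2 * (g * a)).
  by apply: ler_pM; rewrite ?subr_ge0 ?l1norm_ge0 //; lra.
lra.
Qed.

(* A supremum argument: the set of t in [0,1] such that I - sA is monotone
   for all s in [0,t] contains 0, and cannot stop below 1, by the local
   propagation at its supremum. *)
Lemma monotone_pencil_one n (A : 'M[R]_n) :
  mx_nonneg A -> (forall t, 0 <= t <= 1 -> pencil A t \in unitmx) ->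
  monotone (pencil A 1).
Proof.
move=> A0 hU.
pose S : set R := fun t => 0 <= t <= 1 /\ forall s, 0 <= s <= t -> monotone (pencil A s).
have S0 : S 0.
  split; first by rewrite lexx ler01.
  move=> s /andP[s0 s1]; have -> : s = 0 by apply/eqP; rewrite eq_le s1 s0.
  by rewrite /pencil scale0r subr0 => p Y; rewrite mul1mx.
have hS : has_sup S by split; [exists 0 | exists 1 => x [/andP[]]].
set T := sup S.
have T0 : 0 <= T by apply: sup_upper_bound.
have T1 : T <= 1 by apply: ge_sup; [exists 0 | move=> x [/andP[]]].
have [delta delta0 local] := monotone_pencil_local A0 (hU T ltac:(by rewrite T0 T1)).
have [t St Tt] := sup_adherent delta0 hS; rewrite -/T in Tt.
have tT : t <= T by exact: sup_upper_bound hS _ St.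
have [/andP[t0 _] {}St] := St.
have Mt : monotone (pencil A t) by apply: St; rewrite t0 lexx.
have upto u : t <= u <= T + delta -> u <= 1 -> S u.
  move=> /andP[tu uT] u1; split; first by rewrite u1 andbT; lra.
  move=> s /andP[s0 su]; have [st|ts] := leP s t; first by apply: St; rewrite s0 st.
  by apply: (local t) => //; [rewrite tT andbT; lra | rewrite (ltW ts); lra].
have [Td1|Td1] := leP (T + delta) 1.
  have /(sup_upper_bound hS) : S (T + delta) by apply: upto; rewrite ?lexx ?andbT; lra.
  rewrite -/T; lra.
by have [_ S1] := upto 1 ltac:(lra) (lexx 1); apply: S1; rewrite ler01 lexx.
Qed.

End Resolvent.

Section ExplicitToImplicit.
Variable R : realType.

Lemma schur_left_resolvent n (A : 'M[R]_n) :
  mx_nonneg A -> schur_stable A ->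
  exists d : 'rV[R]_n, d = ones_row R n + d *m A /\ mx_nonneg d.
Proof.
move=> A0 hS.
have [Mu Mi] := monotone_inv (monotone_pencil_one A0 (fun t => schur_pencil_unit hS)).
exists (ones_row R n *m invmx (pencil A 1)); split.
  have := mulmxKV Mu (ones_row R n); rewrite {2}/pencil scale1r mulmxBr mulmx1.
  by move/eqP; rewrite subr_eq => /eqP {1}<-.
by apply: mx_nonneg_mul => // i j; rewrite mxE ler01.
Qed.

Lemma diag_posdef n (w : 'rV[R]_n) : (forall a, 0 < w 0 a) -> posdef (diag_mx w).
Proof.
move=> w0 x x0; rewrite bilinear_formE.
have -> : \sum_a \sum_b x a 0 * diag_mx w a b * x b 0 = \sum_a w 0 a * x a 0 ^+ 2.
  apply: eq_bigr => a _; rewrite (bigD1 a) //= big1 ?addr0.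
    by rewrite mxE eqxx mulr1n expr2 mulrCA mulrA.
  by move=> b ba; rewrite mxE eq_sym (negbTE ba) mulr0n mulr0 mul0r.
have [a xa] := nonzero_entry x0.
rewrite (bigD1 a) //= ltr_pwDl //; first by rewrite mulr_gt0 // exprn_even_gt0.
by apply: sumr_ge0 => b _; apply: mulr_ge0; [exact: ltW | exact: sqr_ge0].
Qed.

(* ... and a nonsingular M-matrix: its eigenvalues are its diagonal entries. *)
Lemma diag_Mmatrix n (w : 'rV[R]_n) : (forall a, 0 < w 0 a) -> Mmatrix (diag_mx w).
Proof.
move=> w0; split=> [i j ij|l /eigenvalueP [v hv v0]].
  by rewrite mxE (negbTE ij) mulr0n.
have [j vj] : exists j, v^T j 0 != 0 by apply: nonzero_entry; rewrite trmx_eq0.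
rewrite mxE in vj.
have cw : cmx (diag_mx w) = diag_mx (cmx w).
  by apply/matrixP => a b; rewrite !mxE; case: eqVneq => _; rewrite ?mulr1n ?mulr0n.
move: hv; rewrite cw mul_mx_diag => /(congr1 (fun M : 'rV[R[i]]_n => M 0 j)).
rewrite !mxE mulrC => /(mulIf vj) <-.
have wj_real : ((w 0 j)%:C)%C \is Num.real by rewrite complex_real.
by rewrite (Creal_ReP _ wj_real) -[0]/(0%:C)%C ltcR.
Qed.

(* With d = 1^T + d A and E = diag d we get 1^T E A = d - 1^T, so the
   condition 1^T (alpha E - E A) >= 0 reads 1 >= (1 - alpha) d entrywise. *)
Lemma diag_resolvent_row n (A : 'M[R]_n) (d : 'rV[R]_n) alpha :
  d = ones_row R n + d *m A -> (forall j, (1 - alpha) * d 0 j <= 1) ->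
  mx_nonneg (ones_row R n *m (alpha *: diag_mx d - diag_mx d *m A)).
Proof.
move=> dA hd i j.
have onesE : ones_row R n *m diag_mx d = d.
  by apply/matrixP => a b; rewrite mul_mx_diag !mxE mul1r (ord1 a).
rewrite mulmxBr -scalemxAr mulmxA onesE {1}dA !mxE (ord1 i).
by have := hd j; rewrite {1}dA !mxE; lra.
Qed.

(* Part (ii): E = diag d, F = E A, K = E B, eps = 1 and
   alpha = (s + 1) / (s + 2) where s is the sum of the entries of d >= 1. *)
Lemma explicit_to_implicit n m (A : 'M[R]_n) (B : 'M[R]_(n, m)) :
  mx_nonneg A -> schur_stable A -> mx_nonneg B ->
  exists (E F : 'M[R]_n) (K : 'M[R]_(n, m)) (eps alpha : R),
    [/\ is_diag_mx E, (forall i, 0 < E i i), implicit_conds E F K eps alpha,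
        invmx E *m F = A & invmx E *m K = B].
Proof.
move=> A0 hS B0; have [d [dA d0]] := schur_left_resolvent A0 hS.
have d1 j : 1 <= d 0 j.
  by have := mx_nonneg_mul d0 A0 0 j; rewrite {2}dA !mxE; lra.
pose s := \sum_j d 0 j.
have ds j : d 0 j <= s by rewrite /s (bigD1 j) //= lerDl sumr_ge0.
have s0 : 0 <= s by apply: sumr_ge0.
have dpos j : 0 < d 0 j by apply: lt_le_trans (d1 j).
pose alpha := (s + 1) / (s + 2).
have s2 : (s + 2) != 0 by rewrite gt_eqF //; lra.
have alphaE : 1 - alpha = 1 / (s + 2) by rewrite /alpha; field.
have Eu : diag_mx d \in unitmx.
  by rewrite unitmxE det_diag unitfE gt_eqF // prodr_gt0.
have E0 : mx_nonneg (diag_mx d) by move=> i j; rewrite mxE mulrn_wge0 ?ltW.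
exists (diag_mx d), (diag_mx d *m A), (diag_mx d *m B), 1, alpha; split.
- exact: diag_mx_is_diag.
- by move=> i; rewrite mxE eqxx mulr1n.
- split; [exact: ltr01 | | | exact: diag_Mmatrix | split].
  + rewrite /alpha ltr_pdivrMr ?divr_gt0 ?ltr_pdivlMr; lra.
  + have -> : diag_mx d + (diag_mx d)^T - 1%:M = diag_mx (2 *: d - ones_row R n).
      apply/matrixP => a b; rewrite !mxE; case: eqVneq => [->|_].
        by rewrite !mulr1n; lra.
      by rewrite !mulr0n !addr0 subr0.
    by apply: diag_posdef => a; rewrite !mxE; have := d1 a; lra.
  + exact: mx_nonneg_mul.
  + exact: mx_nonneg_mul.
  + apply: diag_resolvent_row => // j; have := ds j.
    by rewrite alphaE mul1r mulrC ler_pdivrMr; lra.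
- by rewrite mulKmx.
- by rewrite mulKmx.
Qed.

End ExplicitToImplicit.

Theorem theorem2 (R : realType) (n m : nat) :
  (forall (E F : 'M[R]_n) (K : 'M[R]_(n, m)) (eps alpha : R),
      implicit_conds E F K eps alpha ->
      [/\ E \in unitmx,
          positive_system (invmx E *m F) (invmx E *m K) &
          schur_stable (invmx E *m F)]) /\
  (forall (A : 'M[R]_n) (B : 'M[R]_(n, m)),
      mx_nonneg A -> schur_stable A -> mx_nonneg B ->
      exists (E F : 'M[R]_n) (K : 'M[R]_(n, m)) (eps alpha : R),
        [/\ is_diag_mx E, (forall i, 0 < E i i),
            implicit_conds E F K eps alpha,
            invmx E *m F = A & invmx E *m K = B]).
Proof.
split=> [E F K eps alpha | A B].
- exact: implicit_to_explicit.
- exact: explicit_to_implicit.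
Qed.
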